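(* Let $p_1,p_2$ be relatively prime positive integers with $p_1>p_2+1$ and $p_2\ge2$. Write $p_1=ap_2+b$ with integers $a\ge1$ and $0<b<p_2$. Let $\ell\in\{0,\dots,p_1-p_2-1\}$, write $\ell=\nu p_2+\ell'$ with integers $\nu\ge0$ and $0\le\ell'<p_2$, and let $c\in\big[\frac{\ell}{p_1-p_2},\frac{\ell+1}{p_1-p_2}\big)$. Write the first $p_1+p_2$ terms of $S_c(p_1,p_2)$ as $1^{k_1},2,1^{k_2},2,\dots,1^{k_{p_2}},2,1^{k_{p_2+1}}$. Then: - $k_1=\nu+1$; - for $i=2,\dots,p_2$, $k_i=a+1$ if $i=\lceil (jp_2-\ell')/b\rceil+1$ for some $j\in\{1,\dots,b\}$, and $k_i=a$ otherwise; - $k_{p_2+1}=p_1-(k_1+\cdots+k_{p_2})$.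
   Context: Stationary divisor method with cut point $c\in[0,1]$ for votes $(p_1,p_2)$: seats are allocated one at a time. Initially $a_1=a_2=0$; each next seat goes to a party $i$ maximizing $p_i/(a_i+c)$, whose $a_i$ then increases by $1$. Ties are broken in favor of party $1$. For $c=0$ the convention is that $p_1/0>p_2/0$, and $p_i/0>p_j/k$ for $k>0$. $S_c(p_1,p_2)$ is the infinite sequence of party labels (in $\{1,2\}$) of successive seats. It is periodic with period $p_1+p_2$, and its first $p_1+p_2$ terms contain exactly $p_1$ ones and $p_2$ twos. The notation $1^k$ denotes $k$ consecutive $1$'s. *)

From HB Require Import structures.
From mathcomp Require Import all_boot all_order all_algebra.
From mathcomp Require Import reals.
Set Implicit Arguments. Unset Strict Implicit. Unset Printing Implicit Defensive.
Import Order.TTheory GRing.Theory Num.Theory.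
Local Open Scope ring_scope.

Section Stationary.
Variables (R : realType) (c : R) (p1 p2 : nat).

(* Does party 1 get the next seat, when party 1 currently holds a1 seats and
   party 2 holds a2 seats?  A zero
   denominator (only possible when c = 0 and a_i = 0) means priority +infinity;
   ties (including 0-denominator ties) go to party 1. *)
Definition wins1 (a1 a2 : nat) : bool :=
  if a1%:R + c == 0 then true
  else if a2%:R + c == 0 then false
  else p2%:R / (a2%:R + c) <= p1%:R / (a1%:R + c).

Fixpoint alloc (n : nat) : nat * nat :=
  match n with
  | 0 => (0%N, 0%N)
  | n'.+1 => let: (a1, a2) := alloc n' in
             if wins1 a1 a2 then (a1.+1, a2) else (a1, a2.+1)
  end.

(* S_c(p1,p2): the label (1 or 2) of the seat number n (0-indexed, i.e. the
   (n+1)-st term of the sequence). *)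
Definition S (n : nat) : nat :=
  if wins1 (alloc n).1 (alloc n).2 then 1%N else 2%N.

End Stationary.

From HB Require Import structures.
From mathcomp Require Import all_boot all_order all_algebra.
From mathcomp Require Import reals.
From mathcomp Require Import zify ring lra.
Set Implicit Arguments. Unset Strict Implicit. Unset Printing Implicit Defensive.
Import Order.TTheory GRing.Theory Num.Theory.
Local Open Scope ring_scope.

(* For [c] in [[l/(p1-p2), (l+1)/(p1-p2))], party 1 takes the next seat at
   state [(x, y)] exactly when [p2 x <= p1 y + l]: clearing denominators, the
   comparison reads [p2 x - p1 y <= c (p1 - p2)], and [l] is the integer part
   of the right-hand side.  Hence party 2 takes its [(m+1)]-st seat as soon as
   party 1 holds [(p1 m + l) / p2 + 1] seats, and the [(m+1)]-st run of 1's
   has length [(p1 m + l)/p2 - (p1 (m-1) + l)/p2] for [m >= 1].  With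
   [p1 = a p2 + b] and [l = nu p2 + l'] this is [a] plus the increment of
   [(m b + l')/p2], which is [1] exactly when some multiple [j p2] lies in
   [((m-1) b + l', m b + l']], i.e. when [m = ceil ((j p2 - l') / b)]; such a
   [j] is automatically in [1..b]. *)

Section Allocation.
Variables (R : realType) (c : R) (p1 p2 : nat).

Lemma alloc_ones n x y t : alloc c p1 p2 n = (x, y) ->
  (forall u, (u < t)%N -> wins1 c p1 p2 (x + u) y) ->
  alloc c p1 p2 (n + t) = (x + t, y)%N /\
  [seq S c p1 p2 i | i <- iota n t] = nseq t 1%N.
Proof.
move=> Hn Hwin; elim: t Hwin => [|t IH] Hwin; first by rewrite !addn0 Hn.
have [IH1 IH2] := IH (fun u hu => Hwin u (ltnW hu)).
have Wt := Hwin t (ltnSn t).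
split; first by rewrite addnS /= IH1 Wt addnS.
by rewrite -addn1 iotaD map_cat IH2 /= /S IH1 /= Wt -[in RHS]addn1 nseqD.
Qed.

Lemma alloc_block n x y t : alloc c p1 p2 n = (x, y) ->
  (forall u, (u < t)%N -> wins1 c p1 p2 (x + u) y) ->
  ~~ wins1 c p1 p2 (x + t) y ->
  alloc c p1 p2 (n + t.+1) = (x + t, y.+1)%N /\
  [seq S c p1 p2 i | i <- iota n t.+1] = nseq t 1%N ++ [:: 2%N].
Proof.
move=> Hn Hwin Hlose; have [H1 H2] := alloc_ones Hn Hwin.
split; first by rewrite addnS /= H1 (negbTE Hlose).
by rewrite -addn1 iotaD map_cat H2 /= /S H1 /= (negbTE Hlose).
Qed.

Section Threshold.
Variable thr : nat -> nat.
Hypothesis thr_homo : {homo thr : m n / (m <= n)%N}.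
Hypothesis wins1_thr : forall x y, wins1 c p1 p2 x y = (x < thr y)%N.

(* Party 1's seat count at the moment party 2 reaches [m] seats. *)
Definition seats1 m := if m is m'.+1 then thr m' else 0%N.

Lemma seats1_homo : {homo seats1 : m n / (m <= n)%N}.
Proof. by case=> [|m] [|n] //= /ltnSE; apply: thr_homo. Qed.

Lemma seats1_le_thr m : (seats1 m <= thr m)%N.
Proof. by case: m => //= m; apply: thr_homo. Qed.

Lemma alloc_seats1 m :
  alloc c p1 p2 (seats1 m + m) = (seats1 m, m) /\
  [seq S c p1 p2 n | n <- iota 0 (seats1 m + m)] =
    flatten [seq nseq (seats1 i.+1 - seats1 i) 1%N ++ [:: 2%N] | i <- iota 0 m].
Proof.
elim: m => [|m [IH1 IH2]] //.
have Hwin u : (u < thr m - seats1 m)%N -> wins1 c p1 p2 (seats1 m + u) m.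
  by rewrite wins1_thr ltn_subRL addnC.
have Hlose : ~~ wins1 c p1 p2 (seats1 m + (thr m - seats1 m)) m.
  by rewrite wins1_thr subnKC ?seats1_le_thr // ltnn.
have [B1 B2] := alloc_block IH1 Hwin Hlose.
have Hlen : (seats1 m.+1 + m.+1 = seats1 m + m + (thr m - seats1 m).+1)%N.
  by rewrite /=; have := seats1_le_thr m; lia.
rewrite Hlen B1 subnKC ?seats1_le_thr //; split => //.
rewrite iotaD map_cat IH2 add0n B2.
by rewrite -[m.+1]addn1 iotaD map_cat flatten_cat /= cats0.
Qed.

Lemma S_prefix_seats1 m t : (t <= thr m - seats1 m)%N ->
  [seq S c p1 p2 n | n <- iota 0 (seats1 m + m + t)] =
    flatten [seq nseq (seats1 i.+1 - seats1 i) 1%N ++ [:: 2%N] | i <- iota 0 m]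
    ++ nseq t 1%N.
Proof.
move=> ht; have [A1 A2] := alloc_seats1 m.
have Hwin u : (u < t)%N -> wins1 c p1 p2 (seats1 m + u) m.
  by move=> hu; rewrite wins1_thr -ltn_subRL (leq_trans hu).
have [_ B2] := alloc_ones A1 Hwin.
by rewrite iotaD map_cat A2 add0n B2.
Qed.

End Threshold.
End Allocation.

Lemma wins1_linear (R : realType) (c : R) (p1 p2 l x y : nat) :
  (p2 < p1)%N -> (0 < p2)%N ->
  l%:R / (p1 - p2)%:R <= c -> c < l.+1%:R / (p1 - p2)%:R ->
  wins1 c p1 p2 x y = (p2 * x <= p1 * y + l)%N.
Proof.
move=> lt21 p2_gt0 hl hu.
have d_gt0 : (0 : R) < (p1 - p2)%:R by rewrite ltr0n subn_gt0.
rewrite ler_pdivrMr // in hl; rewrite ltr_pdivlMr // in hu.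
have c_ge0 : 0 <= c by rewrite -(pmulr_lge0 _ d_gt0) (le_trans _ hl).
have x_ge0 : (0 : R) <= x%:R by [].
have y_ge0 : (0 : R) <= y%:R by [].
(* [l] is the integer part of [c (p1 - p2)]. *)
have shift u v : (u <= v + l)%N = (u%:R <= v%:R + c * (p1 - p2)%:R :> R).
  apply/idP/idP => [|h]; first by rewrite -(ler_nat R) natrD => h; lra.
  by rewrite -ltnS -(ltr_nat R) -addn1 !natrD; lra.
rewrite /wins1; case: eqP => [x0|x0].
  have -> : x = 0%N by apply/eqP; rewrite -(eqr_nat R); apply/eqP; lra.
  by rewrite muln0.
case: eqP => [y0|y0].
  have c0 : c = 0 by lra.
  have -> : y = 0%N by apply/eqP; rewrite -(eqr_nat R); apply/eqP; lra.
  have : (l%:R : R) <= 0 by rewrite c0 mul0r in hl.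
  rewrite lern0 muln0 add0n => /eqP ->.
  have x_gt0 : (0 < x)%N.
    by rewrite lt0n; apply/eqP => x_eq0; apply: x0; rewrite x_eq0 c0 addr0.
  by rewrite leqNgt muln_gt0 p2_gt0 x_gt0.
rewrite ler_pdivrMr; last by lra.
rewrite mulrAC ler_pdivlMr; last by lra.
rewrite shift !natrM natrB ?(ltnW lt21) //.
by apply/idP/idP => h; nra.
Qed.

Lemma div_ltn_mulP X Y d : (0 < d)%N ->
  reflect (exists j, X < j * d <= Y)%N (X %/ d < Y %/ d)%N.
Proof.
move=> d_gt0; apply: (iffP idP) => [lt_XY | [j /andP [lt_Xj le_jY]]].
  exists (Y %/ d)%N; rewrite leq_divM andbT.
  by rewrite (leq_trans (ltn_ceil X d_gt0)) // leq_mul2r lt_XY orbT.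
by rewrite (@leq_trans j) ?ltn_divLR ?leq_divRL.
Qed.

Lemma divnD_leqS X b d : (0 < d)%N -> (b <= d)%N -> ((X + b) %/ d <= (X %/ d).+1)%N.
Proof.
move=> d_gt0 le_bd; rewrite -ltnS ltn_divLR // mulSn.
by have := ltn_ceil X d_gt0; lia.
Qed.

Lemma ceil_frac_eqS (R : realType) (q r b n : nat) : (0 < b)%N ->
  (Posz n.+2 == Num.ceil ((q%:R - r%:R) / (b%:R : R)) + 1) =
  (n * b + r < q <= n.+1 * b + r)%N.
Proof.
move=> b_gt0; have b_gt0R : (0 : R) < b%:R by rewrite ltr0n.
set v := (q%:R - r%:R) / (b%:R : R).
have -> : (Posz n.+2 == Num.ceil v + 1) = (Posz n < Num.ceil v <= Posz n.+1).
  by move: (Num.ceil v) => z; apply/eqP/andP => [|[]]; lia.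
rewrite ceil_le_int ceil_gt_int -!pmulrn /v ler_pdivrMr // ltr_pdivlMr //.
by rewrite lerBlDr ltrBrDr -!natrM -!natrD ler_nat ltr_nat.
Qed.

Section Quota.
Variables (R : realType) (p1 p2 a b l nu l' : nat).
Hypotheses (b_gt0 : (0 < b)%N) (lt_b_p2 : (b < p2)%N) (p1E : p1 = (a * p2 + b)%N)
  (lE : l = (nu * p2 + l')%N) (lt_l'_p2 : (l' < p2)%N).

Let p2_gt0 : (0 < p2)%N := leq_ltn_trans (leq0n b) lt_b_p2.

Lemma ceil_exists_jump m : (m.+1 < p2)%N ->
  [exists j : 'I_b.+1, (0 < (j : nat))%N &&
     (Posz m.+2 == Num.ceil (((j * p2)%:R - l'%:R) / (b%:R : R)) + 1)] =
  ((m * b + l') %/ p2 < (m.+1 * b + l') %/ p2)%N.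
Proof.
move=> lt_m_p2; apply/existsP/div_ltn_mulP; rewrite ?p2_gt0 //.
  by case=> j /andP [_]; rewrite ceil_frac_eqS //; exists j.
case=> j /andP [lt_Xj le_jY].
have lt_jb : (j < b.+1)%N by rewrite -(ltn_pmul2r p2_gt0); nia.
exists (Ordinal lt_jb); rewrite /= ceil_frac_eqS // lt_Xj le_jY andbT.
by move: lt_Xj; case: (j) => //; rewrite mul0n ltn0.
Qed.

Lemma quota_step m : (m.+1 < p2)%N ->
  ((p1 * m.+1 + l) %/ p2 = (p1 * m + l) %/ p2 +
    if [exists j : 'I_b.+1, (0 < (j : nat))%N &&
          (Posz m.+2 == Num.ceil (((j * p2)%:R - l'%:R) / (b%:R : R)) + 1)%R]
    then a.+1 else a)%N.
Proof.
move=> lt_m_p2; rewrite ceil_exists_jump //.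
have splitE k : (p1 * k + l = (a * k + nu) * p2 + (k * b + l'))%N.
  by rewrite p1E lE; ring.
rewrite !splitE !divnMDl ?p2_gt0 // mulnS.
have -> : (m.+1 * b + l' = m * b + l' + b)%N by ring.
have le_jump := divnD_leqS (m * b + l') p2_gt0 (ltnW lt_b_p2).
have le_mono := leq_div2r p2 (leq_addr b (m * b + l')).
by case: ltnP; lia.
Qed.

End Quota.

Theorem mainTheorem11 (R : realType) (p1 p2 a b l nu l' : nat) (c : R) :
  coprime p1 p2 -> (p2.+1 < p1)%N -> (2 <= p2)%N ->
  (1 <= a)%N -> (0 < b)%N -> (b < p2)%N -> p1 = (a * p2 + b)%N ->
  (l <= p1 - p2 - 1)%N -> l = (nu * p2 + l')%N -> (l' < p2)%N ->
  l%:R / (p1 - p2)%:R <= c -> c < l.+1%:R / (p1 - p2)%:R ->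
  let k : nat -> nat := fun i =>
    if i == 1%N then nu.+1
    else if [exists j : 'I_b.+1,
               (0 < (j : nat))%N &&
               ((i : int) == Num.ceil (((j * p2)%:R - l'%:R) / (b%:R : R)) + 1)]
         then a.+1 else a in
  [seq S c p1 p2 n | n <- iota 0 (p1 + p2)] =
    flatten [seq nseq (k i) 1%N ++ [:: 2%N] | i <- iota 1 p2]
    ++ nseq (p1 - \sum_(1 <= i < p2.+1) k i) 1%N.
Proof.
move=> _ lt_p2_p1 _ _ b_gt0 lt_b_p2 p1E le_l lE lt_l'_p2 hcl hcu k.
have p2_gt0 : (0 < p2)%N by lia.
pose thr y := ((p1 * y + l) %/ p2).+1%N.
have wins1_thr x y : wins1 c p1 p2 x y = (x < thr y)%N.
  by rewrite (wins1_linear x y (ltnW lt_p2_p1) p2_gt0 hcl hcu) ltnS leq_divRL // mulnC.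
have thr_homo : {homo thr : m n / (m <= n)%N}.
  by move=> m n le_mn; rewrite ltnS leq_div2r // leq_add2r leq_mul2l le_mn orbT.
have k_block i : (i < p2)%N -> k i.+1 = (seats1 thr i.+1 - seats1 thr i)%N.
  case: i => [_ | m lt_m_p2].
    by rewrite /k /= subn0 /thr muln0 add0n lE divnMDl // divn_small // addn0.
  by rewrite /k /= /thr (quota_step R b_gt0 lt_b_p2 p1E lE lt_l'_p2 lt_m_p2) subSS addKn.
have sum_k : (\sum_(1 <= i < p2.+1) k i = seats1 thr p2)%N.
  rewrite big_add1 /= (eq_big_nat _ _ (F2 := fun i => seats1 thr i.+1 - seats1 thr i)%N).
    by rewrite telescope_sumn ?subn0 //; apply: seats1_homo.
  by move=> i /andP [_ lt_i_p2]; apply: k_block.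
have blocks : [seq nseq (k i) 1%N ++ [:: 2%N] | i <- iota 1 p2] =
    [seq nseq (seats1 thr i.+1 - seats1 thr i) 1%N ++ [:: 2%N] | i <- iota 0 p2].
  rewrite (iotaDl 1 0) -map_comp; apply/eq_in_map => i.
  by rewrite mem_iota add0n => lt_i_p2 /=; rewrite k_block.
have le_seats1_p1 : (seats1 thr p2 <= p1)%N.
  have [p2' p2E] : exists p2', p2 = p2'.+1 by exists p2.-1; lia.
  by rewrite {1}p2E /= ltn_divLR // [in (p1 * p2)%N]p2E mulnS; lia.
have le_p1_thr : (p1 <= thr p2)%N by rewrite /thr divnMDl // leqW ?leq_addr.
have -> : (p1 + p2 = seats1 thr p2 + p2 + (p1 - seats1 thr p2))%N by lia.
by rewrite S_prefix_seats1 ?blocks ?sum_k //; lia.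
Qed.
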